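(* Let $\mathcal{P}$ be a regular $n$-polytope with automorphism group $W=\langle s_0,\dots,s_{n-1}\rangle$. Let $\mathcal{Q}=\mathcal{P}/N$ be a quotient of $\mathcal{P}$ admitting the flag action of $W$, with base flag $\Psi$ chosen so that $N$ is the stabilizer of $\Psi$ in $W$. Let $\mathcal{R}$ be a regular $d$-polytope (where $d$ need not equal $n$) with $\mathrm{Aut}(\mathcal{R})=\langle\rho_0,\dots,\rho_{d-1}\rangle$, and let $\phi:\mathrm{Aut}(\mathcal{R})\to\mathrm{Aut}(\mathcal{Q})$ be a group isomorphism. For each $i$ let $\nu_i\in W$ be an element with $\Psi^{\nu_i}=\Psi(\rho_i\phi)$, and let $V=\langle\nu_0,\dots,\nu_{d-1}\rangle\le W$. Define $\psi$ from words in the $\rho_i$ to $W$ by $(\rho_{i_1}\rho_{i_2}\cdots\rho_{i_k})\psi=\nu_{i_k}\cdots\nu_{i_2}\nu_{i_1}$. Then $N\cap V$ equals the set of all elements $w\psi$, where $w$ ranges over words in the $\rho_i$ such that $w=1$ as an element of $\mathrm{Aut}(\mathcal{R})$.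
   Context: Abstract polytopes are graded posets with least and greatest faces, all flags of equal length, strongly connected, satisfying the diamond condition; a polytope is regular if its automorphism group is transitive on flags, and its automorphism group is then a string C-group generated by involutions $\rho_0,\dots,\rho_{d-1}$ (resp. $s_0,\dots,s_{n-1}$). The flag action of $W$ on the flags of $\mathcal{Q}$ is the right action in which $s_i$ sends a flag $\Phi$ to the unique flag $\Phi^{s_i}$ differing from $\Phi$ only in its face of rank $i$ (assumed well defined), with $\Phi^{vw}=(\Phi^{v})^{w}$. Automorphisms act on flags on the right, written $\Psi\alpha$, with $\Psi(\alpha\beta)=(\Psi\alpha)\beta$, and they commute with the flag action. $\mathcal{P}/N$ is the quotient of $\mathcal{P}$ by the subgroup $N\le W$. *)

From mathcomp Require Import all_boot.
Set Implicit Arguments. Unset Strict Implicit. Unset Printing Implicit Defensive.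

(* Ranks are shifted by one: a face of rank r (-1 <= r <= n) has [frank] r+1,
   so ranks live in 0 .. n+1 and a flag is indexed by 'I_n.+2. *)

Section PolyAxioms.
Variables (n : nat) (T : Type) (le : T -> T -> Prop) (rk : T -> nat).

Definition is_flagR (Phi : 'I_n.+2 -> T) :=
  (forall i, rk (Phi i) = i) /\
  (forall i j : 'I_n.+2, i <= j -> le (Phi i) (Phi j)).

Definition adjR (j : 'I_n.+2) (Phi Phi' : 'I_n.+2 -> T) :=
  Phi j <> Phi' j /\ (forall k, k <> j -> Phi k = Phi' k).

Definition poly_axioms :=
  (forall F, le F F) /\
  (forall F G, le F G -> le G F -> F = G) /\
  (forall F G H, le F G -> le G H -> le F H) /\
  (forall F, rk F <= n.+1) /\
  (forall F G, le F G -> F <> G -> rk F < rk G) /\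
  (exists F0, rk F0 = 0 /\ forall G, le F0 G) /\
  (exists Fn, rk Fn = n.+1 /\ forall G, le G Fn) /\
  (* gradedness: no gaps in ranks, so all flags have length n+2 *)
  (forall F G, le F G -> (rk F).+1 < rk G ->
     exists H, [/\ le F H, le H G, rk F < rk H & rk H < rk G]) /\
  (forall F G, le F G -> rk G = (rk F).+2 ->
     exists H1 H2, [/\ H1 <> H2,
       le F H1 /\ le H1 G, le F H2 /\ le H2 G &
       forall H, le F H -> le H G -> H <> F -> H <> G -> H = H1 \/ H = H2]) /\
  (forall Phi Psi, is_flagR Phi -> is_flagR Psi ->
     exists (m : nat) (pi : nat -> 'I_n.+2 -> T),
       [/\ pi 0 = Phi, pi m = Psi,
           (forall k, k <= m -> is_flagR (pi k)),
           (forall k, k < m -> exists j, adjR j (pi k) (pi k.+1)) &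
           (forall k j, k <= m -> Phi j = Psi j -> pi k j = Phi j)]).
End PolyAxioms.

Record polytope (n : nat) := Polytope {
  face : Type;
  fle : face -> face -> Prop;
  frank : face -> nat;
  polytope_ax : poly_axioms n fle frank }.

Definition flagfun n (P : polytope n) := 'I_n.+2 -> face P.
Definition is_flag n (P : polytope n) (Phi : flagfun P) :=
  is_flagR (@fle n P) (@frank n P) Phi.
Definition adj n (P : polytope n) (j : 'I_n.+2) (Phi Phi' : flagfun P) :=
  adjR j Phi Phi'.

Definition rk_idx n (i : 'I_n) : 'I_n.+2 := inord i.+1.

Record aut n (P : polytope n) := Aut {
  af : face P -> face P;
  ab : face P -> face P;
  afK : cancel af ab;
  abK : cancel ab af;
  af_le : forall F G, fle (af F) (af G) <-> fle F G }.

Section AutGroup.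
Variables (n : nat) (P : polytope n).

Lemma amul_K (a b : aut P) : cancel (af b \o af a) (ab a \o ab b).
Proof. by move=> x /=; rewrite afK afK. Qed.
Lemma amul_K' (a b : aut P) : cancel (ab a \o ab b) (af b \o af a).
Proof. by move=> x /=; rewrite abK abK. Qed.
Lemma amul_le (a b : aut P) F G :
  fle ((af b \o af a) F) ((af b \o af a) G) <-> fle F G.
Proof. rewrite /=; split=> H; [apply: (proj1 (af_le a _ _)); apply: (proj1 (af_le b _ _)) | apply: (proj2 (af_le b _ _)); apply: (proj2 (af_le a _ _))]; exact: H. Qed.

(* product "a then b" (automorphisms act on flags on the right) *)
Definition amul (a b : aut P) : aut P :=
  Aut (@amul_K a b) (@amul_K' a b) (@amul_le a b).

Lemma id_K : cancel (@id (face P)) id. Proof. by []. Qed.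
Lemma id_le (F G : face P) : fle (id F) (id G) <-> fle F G. Proof. by []. Qed.
Definition aone : aut P := Aut id_K id_K id_le.

Lemma ainv_le (a : aut P) F G : fle (ab a F) (ab a G) <-> fle F G.
Proof. split=> H; first by move: (proj2 (af_le a (ab a F) (ab a G))); rewrite !abK; apply. by apply: (proj1 (af_le a _ _)); rewrite !abK. Qed.
Definition ainv (a : aut P) : aut P := Aut (abK a) (afK a) (@ainv_le a).
End AutGroup.

Definition fact n (P : polytope n) (Phi : flagfun P) (a : aut P) : flagfun P :=
  fun i => af a (Phi i).

Definition is_regular n (P : polytope n) :=
  forall Phi Phi', is_flag Phi -> is_flag Phi' ->
    exists a : aut P, fact Phi a = Phi'.

Definition distinguished_gens n (P : polytope n) (Phi : flagfun P)
  (rho : 'I_n -> aut P) :=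
  forall i, adj (rk_idx i) Phi (fact Phi (rho i)).

Definition flag_action n (P Q : polytope n) (s : 'I_n -> aut P)
  (act : flagfun Q -> aut P -> flagfun Q) :=
  [/\ forall Phi w, is_flag Phi -> is_flag (act Phi w),
      forall Phi, is_flag Phi -> act Phi (aone P) = Phi,
      forall Phi v w, is_flag Phi -> act Phi (amul v w) = act (act Phi v) w &
      forall Phi i, is_flag Phi -> adj (rk_idx i) Phi (act Phi (s i))].

Definition aut_iso d n (R : polytope d) (Q : polytope n)
  (phi : aut R -> aut Q) :=
  [/\ forall a b, phi (amul a b) = amul (phi a) (phi b),
      injective phi &
      forall b, exists a, phi a = b].

(* Group words in generators g_0..g_{d-1}: a letter (i, true) is g_i and
   (i, false) is g_i^{-1}; [weval g w] is the product, left to right. *)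
Definition weval n (P : polytope n) d (g : 'I_d -> aut P)
  (w : seq ('I_d * bool)) : aut P :=
  foldr (fun x acc => amul (if x.2 then g x.1 else ainv (g x.1)) acc)
        (aone P) w.

Definition psi n (P : polytope n) d (nu : 'I_d -> aut P)
  (w : seq ('I_d * bool)) : aut P := weval nu (rev w).

Definition gen_subgroup n (P : polytope n) d (g : 'I_d -> aut P) (v : aut P) :=
  exists w, v = weval g w.

From mathcomp Require Import all_boot zify.
From Stdlib Require Import FunctionalExtensionality ProofIrrelevance Classical.
Set Implicit Arguments. Unset Strict Implicit. Unset Printing Implicit Defensive.

(* Automorphisms of Q commute with the flag action of W: it suffices to check
   this on the generators s_i, where it holds because adjacent flags are
   unique (diamond condition).  Hence, for every word w in the rho_i,
   Psi^(w psi) = Psi (w phi): the reversal in psi compensates for the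
   commutation.  As Aut(Q) acts freely on flags (strong flag-connectivity),
   w psi fixes Psi iff w phi = 1, i.e. iff w = 1 in Aut(R); and V is the set
   of values of psi, since reversing words is a bijection. *)

Section AutGroupLaws.
Variables (n : nat) (X : polytope n).

Lemma aut_eq (a b : aut X) : af a =1 af b -> a = b.
Proof.
case: a => fa ba Ka K'a La; case: b => fb bb Kb K'b Lb /= /functional_extensionality Ef.
subst fb; have Eb : ba = bb.
  by apply: functional_extensionality => x; rewrite -{1}(K'b x) Ka.
subst bb; congr Aut; exact: proof_irrelevance.
Qed.

Lemma amulA (a b c : aut X) : amul (amul a b) c = amul a (amul b c).
Proof. exact: aut_eq. Qed.

Lemma amul1l (a : aut X) : amul (aone X) a = a.
Proof. exact: aut_eq. Qed.

Lemma amul1r (a : aut X) : amul a (aone X) = a.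
Proof. exact: aut_eq. Qed.

Lemma amulV (a : aut X) : amul a (ainv a) = aone X.
Proof. by apply: aut_eq => x /=; rewrite afK. Qed.

Lemma amulVl (a : aut X) : amul (ainv a) a = aone X.
Proof. by apply: aut_eq => x /=; rewrite abK. Qed.

Lemma fact_amul (Phi : flagfun X) (a b : aut X) :
  fact (fact Phi a) b = fact Phi (amul a b).
Proof. by []. Qed.

End AutGroupLaws.

Lemma morph_aone n m (X : polytope n) (Y : polytope m) (f : aut X -> aut Y) :
  (forall a b, f (amul a b) = amul (f a) (f b)) -> f (aone X) = aone Y.
Proof.
move=> fM; have E := fM (aone X) (aone X); rewrite amul1l in E.
by rewrite -[f _]amul1l -(amulVl (f (aone X))) amulA -E.
Qed.

Section PolytopeFaces.
Variables (n : nat) (X : polytope n).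
Implicit Types (F G H : face X) (Phi : flagfun X) (a : aut X).

Lemma fle_refl F : fle F F.
Proof. by case: (polytope_ax X). Qed.

Lemma fle_trans F G H : fle F G -> fle G H -> fle F H.
Proof. by case: (polytope_ax X) => _ [_ [T _]]; apply: T. Qed.

Lemma frank_max F : frank F <= n.+1.
Proof. by case: (polytope_ax X) => _ [_ [_ [T _]]]; apply: T. Qed.

Lemma fle_frank_lt F G : fle F G -> F <> G -> frank F < frank G.
Proof. by case: (polytope_ax X) => _ [_ [_ [_ [T _]]]]; apply: T. Qed.

Lemma bottom_face : exists F0, frank F0 = 0 /\ forall G, fle F0 G.
Proof. by case: (polytope_ax X) => _ [_ [_ [_ [_ [T _]]]]]. Qed.

Lemma top_face : exists Fn, frank Fn = n.+1 /\ forall G, fle G Fn.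
Proof. by case: (polytope_ax X) => _ [_ [_ [_ [_ [_ [T _]]]]]]. Qed.

Lemma graded F G : fle F G -> (frank F).+1 < frank G ->
  exists H, [/\ fle F H, fle H G, frank F < frank H & frank H < frank G].
Proof. by case: (polytope_ax X) => _ [_ [_ [_ [_ [_ [_ [T _]]]]]]]; apply: T. Qed.

Lemma diamond F G : fle F G -> frank G = (frank F).+2 ->
  exists H1 H2, [/\ H1 <> H2, fle F H1 /\ fle H1 G, fle F H2 /\ fle H2 G &
    forall H, fle F H -> fle H G -> H <> F -> H <> G -> H = H1 \/ H = H2].
Proof. by case: (polytope_ax X) => _ [_ [_ [_ [_ [_ [_ [_ [T _]]]]]]]]; apply: T. Qed.

Lemma flag_connected Phi Phi' : is_flag Phi -> is_flag Phi' ->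
  exists (m : nat) (pi : nat -> flagfun X),
    [/\ pi 0 = Phi, pi m = Phi', forall k, k <= m -> is_flag (pi k),
        forall k, k < m -> exists j, adj j (pi k) (pi k.+1) &
        forall k j, k <= m -> Phi j = Phi' j -> pi k j = Phi j].
Proof. by case: (polytope_ax X) => _ [_ [_ [_ [_ [_ [_ [_ [_ T]]]]]]]]; apply: T. Qed.

Lemma fle_frank F G : fle F G -> frank F <= frank G.
Proof.
by move=> FG; case: (classic (F = G)) => [->//|/(fle_frank_lt FG)/ltnW].
Qed.

Lemma frank_inj_min F G : frank F = 0 -> frank G = 0 -> F = G.
Proof.
have [F0 [rF0 F0le]] := bottom_face.
suff E H : frank H = 0 -> F0 = H by move=> /E <- /E <-.
by move=> rH; apply: NNPP => /(fle_frank_lt (F0le H)); lia.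
Qed.

Lemma frank_inj_max F G : frank F = n.+1 -> frank G = n.+1 -> F = G.
Proof.
have [Fn [rFn leFn]] := top_face.
suff E H : frank H = n.+1 -> H = Fn by move=> /E -> /E ->.
by move=> rH; apply: NNPP => /(fle_frank_lt (leFn H)); lia.
Qed.

Definition chain_between F G (c : nat -> face X) :=
  [/\ c (frank F) = F, c (frank G) = G,
      forall i, frank F <= i <= frank G -> frank (c i) = i &
      forall i j, frank F <= i -> i <= j -> j <= frank G -> fle (c i) (c j)].

Lemma chain_between_short F G :
  fle F G -> frank G <= (frank F).+1 -> exists c, chain_between F G c.
Proof.
move=> FG rFG; case: (ltnP (frank F) (frank G)) => ltFG.
  exists (fun i => if i <= frank F then F else G); split.
  - by rewrite leqnn.
  - by rewrite leqNgt ltFG.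
  - by move=> i /andP[? ?]; case: ifP; lia.
  - by move=> i j *; do 2 case: ifP => ?; first [exact: fle_refl | exact: FG | lia].
have -> : G = F by apply: NNPP => /nesym /(fle_frank_lt FG); lia.
by exists (fun=> F); split=> // *; [lia | exact: fle_refl].
Qed.

Lemma chain_between_cat F H G c1 c2 : fle F H -> fle H G ->
  chain_between F H c1 -> chain_between H G c2 ->
  chain_between F G (fun i => if i <= frank H then c1 i else c2 i).
Proof.
move=> FH HG [c1F c1H c1rk c1le] [c2H c2G c2rk c2le].
have := fle_frank FH; have := fle_frank HG => rHG rFH.
split.
- by rewrite rFH.
- case: ifP => // rGH; have E : frank G = frank H by lia.
  by rewrite E c1H -c2H -E c2G.
- by move=> i /andP[? ?]; case: ifP => ?; [apply: c1rk | apply: c2rk]; lia.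
- move=> i j *; do 2 case: ifP => ?; try lia.
  + by apply: c1le; lia.
  + apply: fle_trans (c1le i (frank H) _ _ _) _; try lia.
    by rewrite c1H -{1}c2H; apply: c2le; lia.
  + by apply: c2le; lia.
Qed.

Lemma exists_chain_between F G : fle F G -> exists c, chain_between F G c.
Proof.
have [m] := ubnP (frank G - frank F); elim: m F G => // m IH F G rFG FG.
case: (leqP (frank G) (frank F).+1) => short; first exact: chain_between_short.
have [H [FH HG rFH rHG]] := graded FG short.
have [c1 C1] : exists c, chain_between F H c by apply: IH => //; lia.
have [c2 C2] : exists c, chain_between H G c by apply: IH => //; lia.
by eexists; apply: chain_between_cat C1 C2.
Qed.

Lemma flag_through F : exists Phi, is_flag Phi /\ exists i, Phi i = F.
Proof.
have [F0 [rF0 F0le]] := bottom_face; have [Fn [rFn leFn]] := top_face.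
have [c1 C1] := exists_chain_between (F0le F).
have [c2 C2] := exists_chain_between (leFn F).
have [_ _ crk cle] := chain_between_cat (F0le F) (leFn F) C1 C2.
rewrite rF0 rFn in crk cle.
exists (fun i : 'I_n.+2 => if i <= frank F then c1 i else c2 i); split.
  split=> [i|i j ij]; [apply: crk | apply: cle]; have := ltn_ord i; try have := ltn_ord j; lia.
exists (inord (frank F)); have := frank_max F.
by case: C1 => _ c1F _ _ rF; rewrite inordK ?leqnn ?c1F //; lia.
Qed.

Lemma af_inj a : injective (af a).
Proof. exact: can_inj (afK a). Qed.

Lemma frank_af a F : frank (af a F) = frank F.
Proof.
suff rk_ge r b G : frank G = r -> r <= frank (af b G).
  apply/eqP; rewrite eqn_leq rk_ge // andbT.
  by move: (rk_ge _ (ainv a) (af a F) erefl); rewrite /= afK.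
elim: r b G => [//|r IH] b G rG.
have [F0 [rF0 F0le]] := bottom_face.
have [c [_ cG crk cle]] := exists_chain_between (F0le G).
rewrite rF0 in crk cle; have rcr : frank (c r) = r by apply: crk; lia.
have crG : fle (c r) G by rewrite -cG; apply: cle; lia.
have neq : af b (c r) <> af b G by move=> /af_inj E; move: rcr; rewrite E; lia.
have := IH b _ rcr; have := fle_frank_lt (proj2 (af_le b _ _) crG) neq; lia.
Qed.

Lemma is_flag_fact Phi a : is_flag Phi -> is_flag (fact Phi a).
Proof.
move=> [rkPhi lePhi]; split=> [i|i j ij]; rewrite /fact.
  by rewrite frank_af rkPhi.
exact/af_le/lePhi.
Qed.

Lemma adj_fact j Phi Phi' a : adj j Phi Phi' -> adj j (fact Phi a) (fact Phi' a).
Proof.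
by move=> [neq eq]; split=> [/af_inj//|k /eq]; rewrite /fact => ->.
Qed.

Lemma adj_proper j Phi Phi' :
  is_flag Phi -> is_flag Phi' -> adj j Phi Phi' -> 0 < j < n.+1.
Proof.
move=> [rk _] [rk' _] [neq _]; have jmax := ltn_ord j.
case: (posnP j) => [j0|_]; first by case: neq; apply: frank_inj_min; rewrite ?rk ?rk'.
case: (ltnP j n.+1) => // jge; case: neq.
by apply: frank_inj_max; rewrite ?rk ?rk'; lia.
Qed.

(* The two candidate faces at index [j] are the two faces of the diamond
   between the faces of ranks [j-1] and [j+1] shared by all three flags. *)
Lemma adj_uniq j Phi Phi1 Phi2 : is_flag Phi -> is_flag Phi1 -> is_flag Phi2 ->
  adj j Phi Phi1 -> adj j Phi Phi2 -> Phi1 = Phi2.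
Proof.
move=> fPhi fPhi1 fPhi2 A1 A2; have /andP [j0 jn] := adj_proper fPhi fPhi1 A1.
pose jm : 'I_n.+2 := inord j.-1; pose jp : 'I_n.+2 := inord j.+1.
have vjm : (jm : nat) = j.-1 by rewrite inordK //; lia.
have vjp : (jp : nat) = j.+1 by rewrite inordK //; lia.
have njm : jm <> j by move=> E; move: vjm; rewrite E; lia.
have njp : jp <> j by move=> E; move: vjp; rewrite E; lia.
case: A1 => [neq1 eq1]; case: A2 => [neq2 eq2].
have le_jm_jp : fle (Phi jm) (Phi jp) by case: fPhi => _ le; apply: le; lia.
have rk_jm_jp : frank (Phi jp) = (frank (Phi jm)).+2.
  by case: fPhi => rk _; rewrite !rk vjm vjp; lia.
have [H1 [H2 [_ _ _ between]]] := diamond le_jm_jp rk_jm_jp.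
have in_diamond Psi : is_flag Psi -> Psi jm = Phi jm -> Psi jp = Phi jp ->
    Psi j = H1 \/ Psi j = H2.
  case=> rk le Em Ep; apply: between; rewrite -?Em -?Ep; try (apply: le; lia);
    move=> E; have := rk j; rewrite E rk ?vjm ?vjp; lia.
have := in_diamond _ fPhi erefl erefl.
have := in_diamond _ fPhi1 (esym (eq1 _ njm)) (esym (eq1 _ njp)).
have := in_diamond _ fPhi2 (esym (eq2 _ njm)) (esym (eq2 _ njp)) => h2 h1 h0.
apply: functional_extensionality => k; case: (eqVneq k j) => [->|/eqP nk].
  by case: h0 h1 h2 => ? [] ? [] ?; congruence.
by rewrite -eq1 ?eq2.
Qed.

Lemma fact_id_aone Phi a : is_flag Phi -> fact Phi a = Phi -> a = aone X.
Proof.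
move=> fPhi fixPhi.
have fix_all Phi' : is_flag Phi' -> fact Phi' a = Phi'.
  move=> fPhi'; have [m [pi [pi0 pim pif piadj _]]] := flag_connected fPhi fPhi'.
  suff fix_pi k : k <= m -> fact (pi k) a = pi k by rewrite -pim fix_pi.
  elim: k => [|k IH] km; first by rewrite pi0.
  have [j Aj] := piadj k km; apply: (@adj_uniq j (pi k)).
  - exact/pif/ltnW.
  - exact/is_flag_fact/pif.
  - exact: pif.
  - by rewrite -{1}(IH (ltnW km)); apply: adj_fact.
  - exact: Aj.
apply: aut_eq => F; have [Phi' [fPhi' [i <-]]] := flag_through F.
by rewrite -[in RHS](fix_all _ fPhi').
Qed.

Lemma fact_inj Phi a b : is_flag Phi -> fact Phi a = fact Phi b -> a = b.
Proof.
move=> fPhi E; have ab1 : amul a (ainv b) = aone X.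
  by apply: (fact_id_aone fPhi); rewrite -fact_amul E fact_amul amulV.
by rewrite -[a]amul1r -(amulVl b) -amulA ab1 amul1l.
Qed.

Lemma distinguished_gens_ind Phi (s : 'I_n -> aut X) (Pr : aut X -> Prop) :
  is_flag Phi -> distinguished_gens Phi s ->
  Pr (aone X) -> (forall i a, Pr a -> Pr (amul (s i) a)) -> forall a, Pr a.
Proof.
move=> fPhi Hs Pr1 PrM a.
have [m [pi [pi0 pim pif piadj _]]] := flag_connected fPhi (is_flag_fact a fPhi).
suff reach k : k <= m -> exists b, Pr b /\ fact Phi b = pi k.
  by have [b [Prb /esym]] := reach m (leqnn m); rewrite pim => /(fact_inj fPhi) ->.
elim: k => [_|k IH km]; first by exists (aone X); rewrite pi0.
have [b [Prb Eb]] := IH (ltnW km); have [j Aj] := piadj k km.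
have /andP [j0 jn] := adj_proper (pif _ (ltnW km)) (pif _ km) Aj.
have ji : j.-1 < n by lia.
pose i : 'I_n := Ordinal ji.
have Ej : rk_idx i = j by apply: val_inj; rewrite /= inordK /=; lia.
exists (amul (s i) b); split; first exact: PrM.
apply: (@adj_uniq j (pi k)).
- exact/pif/ltnW.
- exact: is_flag_fact.
- exact: pif.
- by rewrite -Eb -fact_amul -Ej; apply/adj_fact/Hs.
- exact: Aj.
Qed.

End PolytopeFaces.

Lemma flag_action_fact n (P Q : polytope n) (PhiP : flagfun P)
    (s : 'I_n -> aut P) (act : flagfun Q -> aut P -> flagfun Q) :
  is_flag PhiP -> distinguished_gens PhiP s -> flag_action s act ->
  forall Phi b a, is_flag Phi -> act (fact Phi b) a = fact (act Phi a) b.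
Proof.
move=> fPhiP Hs [act_flag act1 actM act_adj] Phi b a.
move: a Phi; apply: (distinguished_gens_ind fPhiP Hs) => [|i a IH] Phi fPhi.
  by rewrite !act1 //; apply: is_flag_fact.
rewrite !actM //; last exact: is_flag_fact.
suff -> : act (fact Phi b) (s i) = fact (act Phi (s i)) b by apply/IH/act_flag.
apply: (@adj_uniq _ _ (rk_idx i) (fact Phi b)).
- exact: is_flag_fact.
- exact/act_flag/is_flag_fact.
- exact/is_flag_fact/act_flag.
- exact/act_adj/is_flag_fact.
- exact/adj_fact/act_adj.
Qed.

Lemma weval_rcons m d (X : polytope m) (g : 'I_d -> aut X) w x :
  weval g (rcons w x) = amul (weval g w) (if x.2 then g x.1 else ainv (g x.1)).
Proof. by elim: w => [|y w IH] /=; rewrite ?amul1r ?amul1l // IH amulA. Qed.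

Section PsiOnWords.
Variables (n d : nat) (P Q : polytope n) (R : polytope d).
Variables (act : flagfun Q -> aut P -> flagfun Q) (Psi : flagfun Q).
Variables (phi : aut R -> aut Q) (rho : 'I_d -> aut R) (nu : 'I_d -> aut P).
Hypothesis act1 : forall Phi, is_flag Phi -> act Phi (aone P) = Phi.
Hypothesis actM : forall Phi v w, is_flag Phi -> act Phi (amul v w) = act (act Phi v) w.
Hypothesis act_fact : forall Phi b a, is_flag Phi -> act (fact Phi b) a = fact (act Phi a) b.
Hypothesis phiM : forall a b, phi (amul a b) = amul (phi a) (phi b).
Hypothesis fPsi : is_flag Psi.
Hypothesis Hnu : forall i, act Psi (nu i) = fact Psi (phi (rho i)).

Lemma act_ainv_nu i : act Psi (ainv (nu i)) = fact Psi (phi (ainv (rho i))).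
Proof.
set g := phi (ainv (rho i)); have fPsig : is_flag (fact Psi g) by apply: is_flag_fact.
have back : act (fact Psi g) (nu i) = Psi.
  by rewrite act_fact // Hnu fact_amul -phiM amulV (morph_aone phiM).
by rewrite -{1}back -actM // amulV act1.
Qed.

Lemma act_psi w : act Psi (psi nu w) = fact Psi (phi (weval rho w)).
Proof.
elim: w => [|[i []] w IH]; first by rewrite /psi /= act1 // (morph_aone phiM).
all: rewrite /psi rev_cons weval_rcons -/(psi nu w) actM // IH act_fact //=.
- by rewrite Hnu fact_amul -phiM.
- by rewrite act_ainv_nu fact_amul -phiM.
Qed.

End PsiOnWords.

Theorem theorem4 (n d : nat)
  (P : polytope n) (PhiP : flagfun P) (s : 'I_n -> aut P)
  (HPreg : is_regular P) (HPhiP : is_flag PhiP)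
  (Hs : distinguished_gens PhiP s)
  (Q : polytope n) (act : flagfun Q -> aut P -> flagfun Q)
  (Hact : flag_action s act)
  (Psi : flagfun Q) (HPsi : is_flag Psi)
  (N : aut P -> Prop) (HN : forall w, N w <-> act Psi w = Psi)
  (R : polytope d) (PhiR : flagfun R) (rho : 'I_d -> aut R)
  (HRreg : is_regular R) (HPhiR : is_flag PhiR)
  (Hrho : distinguished_gens PhiR rho)
  (phi : aut R -> aut Q) (Hphi : aut_iso phi)
  (nu : 'I_d -> aut P)
  (Hnu : forall i, act Psi (nu i) = fact Psi (phi (rho i))) :
  forall v : aut P,
    (N v /\ gen_subgroup nu v) <->
    (exists w : seq ('I_d * bool), weval rho w = aone R /\ v = psi nu w).
Proof.
have [_ act1 actM _] := Hact; have [phiM phi_inj _] := Hphi.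
have act_fact := flag_action_fact HPhiP Hs Hact.
have actPsi := act_psi act1 actM act_fact phiM HPsi Hnu.
move=> v; split.
  move=> [/HN fixv [w vw]]; exists (rev w); rewrite /psi revK; split=> //.
  apply: phi_inj; rewrite (morph_aone phiM); apply: (fact_id_aone HPsi).
  by rewrite -actPsi /psi revK -vw.
move=> [w [w1 ->]]; split; last by exists (rev w).
by apply/HN; rewrite actPsi w1 (morph_aone phiM).
Qed.
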